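(* Let $p\geq2$ and $q\in\,]1,2]$ with $\frac1p+\frac1q=1$. Let $\mathcal{C}\subset\mathbb{R}^m$ be a centrally symmetric compact convex set with nonempty interior which is $(\alpha,p)$-uniformly convex for some $\alpha>0$, i.e. $\delta_{\|\cdot\|_{\mathcal{C}}}(\epsilon)\geq\alpha\epsilon^p$ for all $\epsilon\in[0,2]$. Let $\mathcal{X}\subset\mathbb{R}^m$ with $D=\sup_{x\in\mathcal{X}}\|x\|_{\mathcal{C}^\circ}<\infty$, and consider the class $\mathcal{F}_{\mathcal{C}}=\{x\in\mathcal{X}\mapsto\langle x,w\rangle:\|w\|_{\mathcal{C}}\leq1\}$. Then there exists $C>0$, depending only on $p$ and $\alpha$, such that for every $n\geq1$ and every distribution $\mu$ on $\mathcal{X}$, $R_n(\mathcal{F}_{\mathcal{C}})\leq\frac{C^{1/q}D}{n^{1/p}}$.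
   Context: $\|x\|_{\mathcal{C}}=\inf\{\lambda\geq0:x\in\lambda\mathcal{C}\}$ is the gauge (a norm), $\mathcal{C}^\circ=\{d:\langle x,d\rangle\leq1\ \forall x\in\mathcal{C}\}$ the polar and $\|\cdot\|_{\mathcal{C}^\circ}$ the dual norm of $\|\cdot\|_{\mathcal{C}}$. The modulus of convexity is $\delta_{\|\cdot\|_{\mathcal{C}}}(\epsilon)=\inf\{1-\|(x+y)/2\|_{\mathcal{C}}:\|x\|_{\mathcal{C}}=\|y\|_{\mathcal{C}}=1,\|x-y\|_{\mathcal{C}}\geq\epsilon\}$. For a class $\mathcal{F}$ of functions $\mathcal{X}\to\mathbb{R}$, the Rademacher constant is $R_n(\mathcal{F})=\mathbb{E}_{(\epsilon_i),(x_i)}\big[\sup_{f\in\mathcal{F}}\big|\frac1n\sum_{i=1}^nf(x_i)\epsilon_i\big|\big]$, where $x_1,\dots,x_n$ are i.i.d. from $\mu$ and $\epsilon_1,\dots,\epsilon_n$ are i.i.d. uniform on $\{-1,+1\}$, independent of the $x_i$. *)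

From HB Require Import structures.
From mathcomp Require Import all_boot all_order all_algebra.
From mathcomp Require Import all_classical all_reals all_analysis.
Set Implicit Arguments. Unset Strict Implicit. Unset Printing Implicit Defensive.
Import Order.TTheory GRing.Theory Num.Theory.
Import numFieldNormedType.Exports.
Local Open Scope classical_set_scope.
Local Open Scope ring_scope.

Section Defs.
Variables (R : realType) (m : nat).

Definition inner (x d : 'rV[R]_m) : R := \sum_(i < m) x ord0 i * d ord0 i.

Definition gauge (C : set 'rV[R]_m) (x : 'rV[R]_m) : R :=
  inf [set l : R | 0 <= l /\ exists2 c, C c & x = l *: c].

Definition polar (C : set 'rV[R]_m) : set 'rV[R]_m :=
  [set d | forall x, C x -> inner x d <= 1].

Definition dual_norm (C : set 'rV[R]_m) (x : 'rV[R]_m) : R := gauge (polar C) x.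

Definition modulus_convexity (C : set 'rV[R]_m) (eps : R) : R :=
  inf [set r : R | exists x y : 'rV[R]_m,
        [/\ gauge C x = 1, gauge C y = 1, eps <= gauge C (x - y)
           & r = 1 - gauge C ((2:R)^-1 *: (x + y))]].

Definition centrally_symmetric (C : set 'rV[R]_m) : Prop :=
  forall x, C x -> C (- x).

Definition unif_convex (C : set 'rV[R]_m) (alpha p : R) : Prop :=
  forall eps, 0 <= eps <= 2 -> alpha * powR eps p <= modulus_convexity C eps.

End Defs.

(* Borel sigma-algebras on R^m and on n-tuples of points (rows of an n x m matrix) *)
Definition Borel_rV (R : realType) (m : nat) :=
  g_sigma_algebraType (@open 'rV[R]_m).
Definition Borel_sample (R : realType) (n m : nat) :=
  g_sigma_algebraType (@open 'M[R]_(n, m)).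

(* nu is the law of (x_1,...,x_n) with x_i i.i.d. from mu, i.e. nu = mu^{(x) n}:
   nu(B_1 x ... x B_n) = prod_i mu(B_i) for all Borel B_i
   (this characterizes the product measure uniquely). *)
Definition iid_law (R : realType) (n m : nat)
    (mu : probability (Borel_rV R m) R) (nu : probability (Borel_sample R n m) R) : Prop :=
  forall B : 'I_n -> set (Borel_rV R m),
    (forall i, measurable (B i)) ->
    fine (nu [set M : Borel_sample R n m | forall i, B i (row i M)]) =
    \prod_(i < n) fine (mu (B i)).

(* the distribution mu lives on X: it gives full mass to a Borel subset of X *)
Definition supported_on (R : realType) (m : nat)
    (mu : probability (Borel_rV R m) R) (X : set 'rV[R]_m) : Prop :=
  exists2 A : set (Borel_rV R m), measurable A /\ A `<=` X & mu A = 1%E.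

Definition sgn (R : realType) (b : bool) : R := if b then 1 else -1.

(* Rademacher constant R_n(F_C) for the class F_C = {x |-> <x,w> : ||w||_C <= 1},
   x_1..x_n ~ nu (the rows), eps uniform on {-1,1}^n independent of the x_i *)
Definition rademacher_FC (R : realType) (n m : nat) (C : set 'rV[R]_m)
    (nu : probability (Borel_sample R n m) R) : \bar R :=
  (\int[nu]_(M in setT)
     ((((2:R) ^+ n)^-1)%:E *
      \sum_(s : {ffun 'I_n -> bool})
        ereal_sup [set (`| n%:R^-1 * \sum_(i < n) sgn R (s i) * inner (row i M) w |)%:E
                  | w in [set w : 'rV[R]_m | (gauge C w <= 1)%R]]))%E.

From HB Require Import structures.
From mathcomp Require Import all_boot all_order all_algebra.
From mathcomp Require Import all_classical all_reals all_analysis.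
From mathcomp Require Import ring lra.
Set Implicit Arguments.
Unset Strict Implicit.
Unset Printing Implicit Defensive.

Import Order.TTheory GRing.Theory Num.Theory.
Import numFieldNormedType.Exports.
Import HBNNSimple.
Local Open Scope classical_set_scope.
Local Open Scope ring_scope.

(* Let h(v) = sup_{c in C} <c, v> be the support function of C; it is bounded
   by the dual norm, and sup_{||w||_C <= 1} |<x, w>| <= h(x).  Uniform convexity
   of ||.||_C with power p makes h uniformly smooth with the conjugate power q:
   choosing near-maximisers w1, w2 of <., v + u> and <., v - u> on the unit
   sphere, the midpoint (w1 + w2)/2 has norm at most 1 - alpha ||w1 - w2||^p,
   and Young's inequality trades this gain against <w1 - w2, u>.  Expanding
   (1 + a)^q to second order then gives
     h(v + u)^q + h(v - u)^q <= 2 h(v)^q + K h(u)^q,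
   with K depending only on p and alpha.  Flipping one sign at a time, the
   average over sign vectors s of h(sum_i s_i x_i)^q is at most K n D^q when
   every h(x_i) <= D; by the power mean inequality the average of
   h(sum_i s_i x_i) is at most (K n)^(1/q) D, and dividing by n bounds the
   Rademacher average of every sample in the support, hence its expectation. *)

Section PowRInequalities.
Variable R : realType.

Lemma powR_le_tangent (th y : R) : 0 < th <= 1 -> 0 <= y ->
  y `^ th <= 1 + th * (y - 1).
Proof.
move=> /andP[th0 th1] y0.
have [->|th_neq1] := eqVneq th 1; first by rewrite powRr1// mul1r addrC subrK.
have th_lt1 : th < 1 by rewrite lt_neqAle th_neq1 th1.
have thV0 : 0 < th^-1 by rewrite invr_gt0.
have th'V0 : 0 < (1 - th)^-1 by rewrite invr_gt0 subr_gt0.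
have conj : th^-1^-1 + (1 - th)^-1^-1 = 1 by rewrite !invrK addrC subrK.
have := conjugate_powR (powR_ge0 y th) ler01 thV0 th'V0 conj.
rewrite mulr1 -powRrM mulfV ?gt_eqF// powRr1// powR1 !invrK => /le_trans; apply.
by rewrite mul1r mulrBr mulr1 [y * th]mulrC addrC -!addrA (addrC (- th)).
Qed.

Section ExponentBetweenOneAndTwo.
Variable q : R.
Hypothesis q12 : 1 < q <= 2.

Let q_gt1 : 1 < q. Proof. by case/andP: q12. Qed.
Let q_gt0 : 0 < q. Proof. exact: lt_trans q_gt1. Qed.
Let q_le2 : q <= 2. Proof. by case/andP: q12. Qed.

Lemma powR_le_quadratic (y : R) : 0 <= y ->
  y `^ q <= 1 + q * (y - 1) + (q - 1) * (y - 1) ^+ 2.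
Proof.
move=> y0; rewrite -(mulr_powRB1 y0 q_gt0).
have q1_01 : 0 < q - 1 <= 1 by rewrite subr_gt0 q_gt1 /= lerBlDr -[1 + 1]/2 q_le2.
apply: le_trans (ler_wpM2l y0 (powR_le_tangent q1_01 y0)) _.
by rewrite le_eqVlt; apply/orP; left; apply/eqP; ring.
Qed.

Lemma expr2_le_powR (t : R) : 0 <= t <= 1 -> t ^+ 2 <= t `^ q.
Proof.
case/andP=> t0 t1; have [->|t_neq0] := eqVneq t 0; first by rewrite expr0n powR_ge0.
rewrite -powR_mulrn//; apply: ger_powR => //.
by rewrite lt_neqAle eq_sym t_neq0 t0.
Qed.

Lemma powR_two_point_unit (c a b t : R) : 0 <= t <= 1 ->
  `|a| <= t -> `|b| <= t -> a + b <= c * t `^ q ->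
  (1 + a) `^ q + (1 + b) `^ q <= 2 + (q * c + 2 * (q - 1)) * t `^ q.
Proof.
move=> t01 a_t b_t ab.
have sq_le (x : R) : `|x| <= t -> (q - 1) * x ^+ 2 <= (q - 1) * t `^ q.
  move=> x_t; apply: ler_wpM2l; first by rewrite subr_ge0 ltW.
  apply: le_trans (expr2_le_powR t01).
  by rewrite -real_normK ?num_real// lerXn2r ?nnegrE// (le_trans _ x_t).
have quad (x : R) : `|x| <= t -> (1 + x) `^ q <= 1 + q * x + (q - 1) * x ^+ 2.
  move=> x_t; have := @powR_le_quadratic (1 + x).
  rewrite [1 + x - 1]addrC addKr; apply.
  case/andP: t01 => _ t1; have := le_trans x_t t1; rewrite ler_norml; lra.
have qab : q * (a + b) <= q * (c * t `^ q) by rewrite ler_pM2l.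
have := lerD (quad _ a_t) (quad _ b_t); have := sq_le _ a_t; have := sq_le _ b_t.
lra.
Qed.

Lemma powR_le_four (X V U : R) : 0 <= X -> V <= U -> `|X - V| <= U ->
  X `^ q <= 4 * U `^ q.
Proof.
move=> X0 VU XV; have U0 : 0 <= U by move: XV; rewrite ler_norml => /andP[]; lra.
apply: (@le_trans _ _ ((2 * U) `^ q)).
  apply: ge0_ler_powR; rewrite ?nnegrE ?mulr_ge0 //; first exact: ltW.
  by move: XV; rewrite ler_norml => /andP[]; lra.
rewrite powRM // ler_wpM2r ?powR_ge0 //.
have -> : 4 = 2 `^ 2 :> R by rewrite powR_mulrn // expr2; lra.
by apply: ler_powR => //; rewrite ler1n.
Qed.

Lemma powR_two_point (c A B V U : R) : 0 <= c -> 0 <= A -> 0 <= B -> 0 <= U ->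
  `|A - V| <= U -> `|B - V| <= U ->
  (0 < V -> A + B <= 2 * V + c * V * (U / V) `^ q) ->
  A `^ q + B `^ q <= 2 * V `^ q + (q * c + 2 * (q - 1) + 8) * U `^ q.
Proof.
move=> c0 A0 B0 U0 AV BV ABV.
have q1_ge0 : 0 <= q - 1 by rewrite subr_ge0 ltW.
have Uq0 := powR_ge0 U q; have Vq0 := powR_ge0 V q.
case: (ltrP U V) => [UV|VU].
  have V0 : 0 < V := le_lt_trans U0 UV.
  set t := U / V.
  have t01 : 0 <= t <= 1.
    by rewrite divr_ge0 ?(ltW V0) //= ler_pdivrMr // mul1r ltW.
  have rel (X : R) : `|X - V| <= U -> `|X / V - 1| <= t.
    move=> XV; have -> : X / V - 1 = (X - V) / V by rewrite mulrBl divff ?gt_eqF.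
    by rewrite normrM [`|V^-1|]gtr0_norm ?invr_gt0 // /t ler_pM2r ?invr_gt0.
  have ab : (A / V - 1) + (B / V - 1) <= c * t `^ q.
    rewrite -(ler_pM2r V0) (_ : _ * V = A + B - 2 * V); last by field; rewrite gt_eqF.
    by have := ABV V0; rewrite -/t; lra.
  have homog (X : R) : 0 <= X -> X `^ q = V `^ q * (1 + (X / V - 1)) `^ q.
    move=> X0; rewrite addrC subrK -powRM ?divr_ge0 ?(ltW V0) //.
    by rewrite mulrC divfK ?gt_eqF.
  rewrite (homog A) // (homog B) // -mulrDr.
  have Ut : U `^ q = V `^ q * t `^ q.
    by rewrite -powRM ?(ltW V0) ?(andP t01).1 // /t [V * _]mulrC divfK ?gt_eqF.
  apply: le_trans (ler_wpM2l Vq0 (powR_two_point_unit t01 (rel _ AV) (rel _ BV) ab)) _.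
  by rewrite mulrDr mulrCA -Ut; lra.
have := powR_le_four A0 VU AV; have := powR_le_four B0 VU BV.
have : 0 <= (q * c + 2 * (q - 1)) * U `^ q.
  by rewrite !mulr_ge0 // ?addr_ge0 // !mulr_ge0 // ltW.
lra.
Qed.

End ExponentBetweenOneAndTwo.

Section ConjugateExponents.
Variables p q : R.
Hypotheses (p0 : 0 < p) (q0 : 0 < q) (pq : p^-1 + q^-1 = 1).

Definition young_coef (k : R) := (k * p) `^ (- (q / p)) / q.

Lemma young_coef_ge0 k : 0 <= young_coef k.
Proof. by rewrite divr_ge0 ?powR_ge0 ?ltW. Qed.

Lemma young_weighted (k t tau : R) : 0 < k -> 0 <= t -> 0 <= tau ->
  t * tau <= k * t `^ p + young_coef k * tau `^ q.
Proof.
move=> k0 t0 tau0.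
have kp0 : 0 < k * p by rewrite mulr_gt0.
set s := (k * p) `^ p^-1.
have s0 : 0 < s by rewrite powR_gt0.
have := conjugate_powR (mulr_ge0 t0 (ltW s0)) (divr_ge0 tau0 (ltW s0)) p0 q0 pq.
rewrite mulrACA divff ?gt_eqF // mulr1 => /le_trans; apply.
have sp : s `^ p = k * p by rewrite -powRrM mulVf ?gt_eqF // powRr1 ?ltW.
have sVq : s^-1 `^ q = (k * p) `^ (- (q / p)).
  by rewrite /s -powRN -powRrM mulNr [p^-1 * q]mulrC.
rewrite powRM ?(ltW s0) // sp powRM ?invr_ge0 ?(ltW s0) // sVq /young_coef.
by rewrite le_eqVlt; apply/orP; left; apply/eqP; field; rewrite !gt_eqF.
Qed.

Lemma power_mean_le (I : finType) (y : I -> R) (M : R) :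
  0 <= M -> (forall i, 0 <= y i) ->
  \sum_i y i `^ q <= #|I|%:R * M `^ q -> \sum_i y i <= #|I|%:R * M.
Proof.
move=> M0 y0 sum_le; have [M_eq0|M_neq0] := eqVneq M 0.
  have sum0 : \sum_i y i `^ q = 0.
    apply/eqP; rewrite eq_le sumr_ge0 ?andbT //; last by move=> i _; exact: powR_ge0.
    by move: sum_le; rewrite M_eq0 powR0 ?gt_eqF // mulr0.
  rewrite M_eq0 mulr0 big1 // => i _; apply: (@powR_eq0_eq0 _ _ q).
  by move/psumr_eq0P : sum0 => ->// j _; exact: powR_ge0.
have {M_neq0}M0 : 0 < M by rewrite lt_neqAle eq_sym M_neq0.
have conj : q^-1 + p^-1 = 1 by rewrite addrC.
have pointwise i : y i <= M * ((y i / M) `^ q / q + p^-1).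
  have := conjugate_powR (divr_ge0 (y0 i) (ltW M0)) ler01 q0 p0 conj.
  by rewrite mulr1 powR1 mul1r -(ler_pM2l M0) mulrCA divff ?gt_eqF // mulr1.
apply: le_trans (ler_sum _ (fun i _ => pointwise i)) _.
have Mq0 : 0 < M `^ q by rewrite powR_gt0.
have scale i : (y i / M) `^ q = y i `^ q / M `^ q.
  by rewrite powRM ?invr_ge0 ?(ltW M0) // -powR_inv1 ?(ltW M0) // -powRrM mulN1r powRN.
under eq_bigr do rewrite scale.
rewrite -mulr_sumr big_split /= -!mulr_suml sumr_const mulrC ler_pM2r //.
have ratio : (\sum_i y i `^ q) / M `^ q / q <= #|I|%:R / q.
  by rewrite ler_pM2r ?invr_gt0 // ler_pdivrMr.
apply: le_trans (lerD ratio (lexx _)) _.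
have -> : #|I|%:R / q + p^-1 *+ #|I| = #|I|%:R * (p^-1 + q^-1) :> R.
  by rewrite -mulr_natr; ring.
by rewrite pq mulr1.
Qed.

End ConjugateExponents.

End PowRInequalities.

Lemma sum_le_involution (R : numDomainType) (I : finType) (g : I -> I) (F G : I -> R) :
  involutive g -> (forall i, F i + F (g i) <= G i + G i) ->
  \sum_i F i <= \sum_i G i.
Proof.
move=> gK FG; rewrite -(ler_pMn2r (isT : 0 < 2)%N) !mulr2n.
rewrite [X in X + _ <= _](reindex_inj (can_inj gK)) -!big_split /=.
by apply: ler_sum => i _; rewrite addrC.
Qed.

Section RowEvents.
Variable R : realType.

Lemma continuous_row n m (i : 'I_n) : continuous (fun M : 'M[R]_(n, m) => row i M).
Proof.
move=> M s /nbhs_ballP[e e0 es]; apply/nbhs_ballP; exists e => // N [_ MN].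
by apply: es; split => // a j; rewrite !mxE; exact: MN.
Qed.

Lemma measurable_row n m (i : 'I_n) :
  measurable_fun setT (fun M : Borel_sample R n m => row i M : Borel_rV R m).
Proof.
apply: (@measurability _ _ (Borel_sample R n m) (Borel_rV R m) _ _ (@open 'rV[R]_m)) => //.
move=> _ [U oU <-]; rewrite setTI; apply: sub_sigma_algebra.
by move: oU; apply: (continuousP _).1; exact: continuous_row.
Qed.

Lemma measurable_rows_in n m (A : set (Borel_rV R m)) : measurable A ->
  measurable [set M : Borel_sample R n m | forall i, A (row i M)].
Proof.
move=> mA; rewrite [X in measurable X](_ : _ = \bigcap_(i in [set: 'I_n])
    [set M : Borel_sample R n m | A (row i M)]); last first.
  by apply/seteqP; split => [M MA i _|M MA i]; exact: MA.
apply: fin_bigcap_measurable; first exact: finite_finset.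
by move=> i _; rewrite -[X in measurable X]setTI; exact: measurable_row.
Qed.

Lemma iid_law_rows_in n m (mu : probability (Borel_rV R m) R)
    (nu : probability (Borel_sample R n m) R) (A : set (Borel_rV R m)) :
  iid_law mu nu -> measurable A -> mu A = 1%E ->
  nu [set M : Borel_sample R n m | forall i, A (row i M)] = 1%E.
Proof.
move=> iid mA muA; have := iid (fun=> A) (fun=> mA).
rewrite big1 => [nuA|i _]; last by rewrite muA.
rewrite -[LHS]fineK ?nuA // ge0_fin_numE ?measure_ge0 //.
by rewrite (le_lt_trans (probability_le1 _ _)) ?ltry //; exact: measurable_rows_in.
Qed.

End RowEvents.

(* No measurability of [f] is needed: the integral of a nonnegative function is
   the supremum of the integrals of the simple functions below it. *)
Lemma ge0_integral_le_cst_ae (R : realType) d (T : measurableType d)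
    (P : probability T R) (f : T -> \bar R) (E : set T) (b : R) :
  measurable E -> P E = 1%E -> (forall x, 0 <= f x)%E -> 0 <= b ->
  (forall x, E x -> f x <= b%:E)%E -> (\int[P]_x f x <= b%:E)%E.
Proof.
move=> mE PE f0 b0 fb; rewrite ge0_integralTE //.
apply: ge_ereal_sup => _ [h /= hf <-]; rewrite -integralT_nnsfun.
apply: (@le_trans _ _ (\int[P]_x (cst b%:E) x)%E).
  apply: ae_ge0_le_integral => //.
  - by move=> x _; rewrite lee_fin; exact: fun_ge0.
  - by apply/measurable_realfun.measurable_EFinP; exact: measurable_funPT.
  exists (~` E); split; first exact: measurableC.
    by have := probability_setC P mE; rewrite PE subee.
  by move=> x /= hfb Ex; apply: hfb => _; exact: le_trans (hf x) (fb x Ex).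
rewrite integral_cst // -[leRHS]mule1 lee_wpmul2l ?lee_fin //.
exact: probability_le1.
Qed.

Section SignedSums.
Variables (R : realType) (V : lmodType R) (n : nat) (x : 'I_n -> V).

Local Notation signs := {ffun 'I_n -> bool}.

Definition signed_sum k (s : signs) : V := \sum_(i < n | (i < k)%N) sgn R (s i) *: x i.

Definition flip_sign (j : 'I_n) (s : signs) : signs :=
  [ffun i => if i == j then ~~ s i else s i].

Lemma flip_signK j : involutive (flip_sign j).
Proof. by move=> s; apply/ffunP => i; rewrite !ffunE; case: eqP; rewrite ?negbK. Qed.

Lemma signed_sum0 s : signed_sum 0 s = 0.
Proof. by rewrite /signed_sum big_pred0. Qed.

Lemma signed_sumS (j : 'I_n) s : signed_sum j.+1 s = signed_sum j s + sgn R (s j) *: x j.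
Proof.
rewrite /signed_sum (bigD1 j) ?leqnn //= addrC; congr (_ + _).
apply: eq_bigl => i; rewrite ltnS.
case: (ltngtP i j) => [lt_ij|//|/val_inj ->]; last by rewrite eqxx.
by apply/negP => /eqP eq_ij; move: lt_ij; rewrite eq_ij ltnn.
Qed.

Lemma signed_sum_flip (j : 'I_n) s : signed_sum j (flip_sign j s) = signed_sum j s.
Proof.
apply: eq_bigr => i lt_ij; rewrite ffunE.
by case: eqP => // eq_ij; move: lt_ij; rewrite eq_ij ltnn.
Qed.

Lemma sgn_negbZ b (y : V) : sgn R (~~ b) *: y = - (sgn R b *: y).
Proof. by case: b; rewrite /sgn ?scaleN1r ?scale1r ?opprK. Qed.

End SignedSums.

Section InnerProduct.
Variables (R : realType) (m : nat).
Implicit Types (x y z : 'rV[R]_m).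

Lemma innerC x y : inner x y = inner y x.
Proof. by apply: eq_bigr => i _; rewrite mulrC. Qed.

Lemma innerDl x y z : inner (x + y) z = inner x z + inner y z.
Proof. by rewrite /inner -big_split; apply: eq_bigr => i _; rewrite mxE mulrDl. Qed.

Lemma innerZl k x z : inner (k *: x) z = k * inner x z.
Proof. by rewrite /inner mulr_sumr; apply: eq_bigr => i _; rewrite mxE mulrA. Qed.

Lemma innerNl x z : inner (- x) z = - inner x z.
Proof. by rewrite -scaleN1r innerZl mulN1r. Qed.

Lemma innerBl x y z : inner (x - y) z = inner x z - inner y z.
Proof. by rewrite innerDl innerNl. Qed.

Lemma inner0l z : inner 0 z = 0.
Proof. by rewrite -(scale0r 0) innerZl mul0r. Qed.

Lemma innerDr x y z : inner z (x + y) = inner z x + inner z y.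
Proof. by rewrite !(innerC z) innerDl. Qed.

Lemma innerZr k x z : inner z (k *: x) = k * inner z x.
Proof. by rewrite !(innerC z) innerZl. Qed.

Lemma innerNr x z : inner z (- x) = - inner z x.
Proof. by rewrite !(innerC z) innerNl. Qed.

Lemma inner0r z : inner z 0 = 0.
Proof. by rewrite innerC inner0l. Qed.

Lemma inner_suml (I : Type) (r : seq I) (P : pred I) (F : I -> 'rV[R]_m) z :
  inner (\sum_(i <- r | P i) F i) z = \sum_(i <- r | P i) inner (F i) z.
Proof.
elim/big_rec2: _ => [|i y1 y2 _ <-]; first by rewrite inner0l.
by rewrite innerDl.
Qed.

Lemma inner_signed_sum n (x : 'I_n -> 'rV[R]_m) s w :
  inner w (signed_sum x n s) = \sum_(i < n) sgn R (s i) * inner (x i) w.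
Proof.
rewrite innerC inner_suml (eq_bigl xpredT) => [|i]; last by rewrite ltn_ord.
by apply: eq_bigr => i _; rewrite innerZl.
Qed.

End InnerProduct.

Section ConvexBody.
Variables (R : realType) (m : nat) (C : set 'rV[R]_m).
Hypotheses (C_compact : compact C) (C_convex : convex_set C)
  (C_sym : centrally_symmetric C) (C_int : interior C !=set0).
Implicit Types (x y u v w c : 'rV[R]_m).

Lemma convex_body_conv c1 c2 t : 0 <= t <= 1 -> C c1 -> C c2 ->
  C (t *: c1 + (1 - t) *: c2).
Proof.
move=> /andP[t0 t1] Cc1 Cc2.
by have := @C_convex c1 c2 (Itv01 t0 t1); rewrite !inE => /(_ Cc1 Cc2).
Qed.

Let half01 : 0 <= (2^-1 : R) <= 1.
Proof. by rewrite invr_ge0 ler0n /= invf_le1 // ler1n. Qed.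

Let midpointE a b : 2^-1 *: a + (1 - 2^-1) *: b = 2^-1 *: (a + b) :> 'rV[R]_m.
Proof. by rewrite scalerDr; congr (_ *: _ + _ *: _); field. Qed.

Lemma convex_body0 : C 0.
Proof.
have [x0 /interior_subset Cx0] := C_int.
have := convex_body_conv half01 Cx0 (C_sym Cx0).
by rewrite midpointE addrN scaler0.
Qed.

Lemma convex_body_absorbing x : exists2 d, 0 < d & C (d *: x).
Proof.
have [x0 /nbhs_ballP [e /= e0 ball_C]] := C_int.
set d := e / (2 * (`|x| + 1)).
have d0 : 0 < d by rewrite divr_gt0 // mulr_gt0 // ltr_wpDl.
have dx_e : `|d *: x| < e.
  rewrite normrZ gtr0_norm // /d mulrAC ltr_pdivrMr ?mulr_gt0 ?ltr_wpDl //.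
  by rewrite ltr_pM2l //; have := normr_ge0 x; lra.
have C_plus : C (x0 + d *: x).
  by apply: ball_C; rewrite -ball_normE /ball_ /= opprD addrA addrN add0r normrN.
have C_minus : C (x0 - d *: x).
  by apply: ball_C; rewrite -ball_normE /ball_ /= opprB addrC subrK.
exists d => //.
have := convex_body_conv half01 C_plus (C_sym C_minus).
rewrite midpointE opprB [d *: x - x0]addrC addrACA addrN add0r -mulr2n.
by rewrite -[d *: x *+ 2]scaler_nat !scalerA mulrA mulVf ?mul1r // pnatr_eq0.
Qed.

Lemma convex_body_inner_bounded v : exists b, forall c, C c -> `|inner c v| <= b.
Proof.
have [M [_ M_bound]] := compact_bounded C_compact.
exists (\sum_(j < m) (`|M| + 1) * `|v ord0 j|) => c Cc.
apply: le_trans (ler_norm_sum _ _ _) _; apply: ler_sum => j _.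
rewrite normrM ler_wpM2r //; apply: le_trans (M_bound _ _ _ Cc).
  by rewrite [leRHS]/Num.Def.normr /= mx_normrE; apply/bigmax_geP; right; exists (ord0, j).
by rewrite (le_lt_trans (ler_norm M)) // ltrDl.
Qed.

Definition support_fun v := sup [set inner c v | c in C].

Lemma support_fun_has_sup v : has_sup [set inner c v | c in C].
Proof.
split; first by exists (inner 0 v), 0 => //; exact: convex_body0.
have [b C_b] := convex_body_inner_bounded v.
by exists b => _ [c Cc <-]; apply: le_trans (C_b c Cc); exact: ler_norm.
Qed.

Lemma support_fun_ub v c : C c -> inner c v <= support_fun v.
Proof. by move=> Cc; apply: sup_upper_bound (support_fun_has_sup v) _ _; exists c. Qed.

Lemma support_fun_least v b : (forall c, C c -> inner c v <= b) -> support_fun v <= b.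
Proof.
move=> C_b; apply: ge_sup; first by exists (inner 0 v), 0 => //; exact: convex_body0.
by move=> _ [c Cc <-]; exact: C_b.
Qed.

Lemma support_fun_approx v e : 0 < e -> exists2 c, C c & support_fun v - e < inner c v.
Proof.
by move=> e0; have [_ [c Cc <-] lt_c] := sup_adherent e0 (support_fun_has_sup v); exists c.
Qed.

Lemma support_fun_ge0 v : 0 <= support_fun v.
Proof. by rewrite -(inner0l v); apply: support_fun_ub; exact: convex_body0. Qed.

Lemma support_fun0 : support_fun 0 = 0.
Proof.
apply/eqP; rewrite eq_le support_fun_ge0 andbT.
by apply: support_fun_least => c _; rewrite inner0r.
Qed.

Lemma support_funN v : support_fun (- v) = support_fun v.
Proof.
have le_N w : support_fun (- w) <= support_fun w.
  apply: support_fun_least => c Cc.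
  by rewrite innerNr -innerNl; apply: support_fun_ub; exact: C_sym.
by apply/le_anti; rewrite le_N /= -{1}[v]opprK le_N.
Qed.

Lemma support_funD_le u v : support_fun (u + v) <= support_fun u + support_fun v.
Proof.
by apply: support_fun_least => c Cc; rewrite innerDr lerD // support_fun_ub.
Qed.

Lemma support_fun_lipschitz v u :
  `|support_fun (v + u) - support_fun v| <= support_fun u.
Proof.
have := support_funD_le v u; have := support_funD_le (v + u) (- u).
by rewrite addrK support_funN ler_norml => ? ?; apply/andP; split; lra.
Qed.

Let dilates w := [set l : R | 0 <= l /\ exists2 c, C c & w = l *: c].

Let dilates_neq0 w : dilates w !=set0.
Proof.
have [d d0 Cdw] := convex_body_absorbing w.
exists d^-1; split; first by rewrite invr_ge0 ltW.
by exists (d *: w) => //; rewrite scalerA mulVf ?gt_eqF ?scale1r.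
Qed.

Let dilates_lb w : has_lbound (dilates w).
Proof. by exists 0 => l []. Qed.

Lemma gauge_ge0 w : 0 <= gauge C w.
Proof. by apply: lb_le_inf (dilates_neq0 w) _ => l []. Qed.

Lemma gauge_le_scale l c : 0 <= l -> C c -> gauge C (l *: c) <= l.
Proof. by move=> l0 Cc; apply: (ge_inf (dilates_lb _)); split => //; exists c. Qed.

Lemma gauge_le1 c : C c -> gauge C c <= 1.
Proof. by move=> Cc; rewrite -[c]scale1r; exact: gauge_le_scale. Qed.

Lemma gauge0 : gauge C 0 = 0.
Proof.
apply/eqP; rewrite eq_le gauge_ge0 andbT -(scale0r (0 : 'rV[R]_m)).
by apply: gauge_le_scale => //; exact: convex_body0.
Qed.

Lemma gauge_approx w e : 0 < e ->
  exists l c, [/\ 0 <= l, C c, w = l *: c & l < gauge C w + e].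
Proof.
move=> e0; have w_inf : has_inf (dilates w) by split; [exact: dilates_neq0 | exact: dilates_lb].
have [l [l0 [c Cc ->]] lt_l] := inf_adherent e0 w_inf.
by exists l, c.
Qed.

Lemma inner_le_gauge_support_fun w v : inner w v <= gauge C w * support_fun v.
Proof.
apply/ler_addgt0Pr => e e0.
have h0 := support_fun_ge0 v.
set eps := e / (support_fun v + 1).
have eps0 : 0 < eps by rewrite divr_gt0 // ltr_wpDl.
have [l [c [l0 Cc -> l_lt]]] := gauge_approx w eps0.
rewrite innerZl.
have h1 : l * inner c v <= l * support_fun v by rewrite ler_wpM2l // support_fun_ub.
have h2 : l * support_fun v <= (gauge C (l *: c) + eps) * support_fun v.
  by rewrite ler_wpM2r // ltW.
have h3 : eps * support_fun v <= e.
  by rewrite /eps mulrAC ler_pdivrMr ?ltr_wpDl // ler_pM2l //; lra.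
by rewrite mulrDl in h2; lra.
Qed.

Lemma abs_inner_le_support_fun w v : gauge C w <= 1 -> `|inner w v| <= support_fun v.
Proof.
move=> w1.
have le_h u : inner w u <= support_fun u.
  exact: le_trans (inner_le_gauge_support_fun w u) (ler_piMl (support_fun_ge0 u) w1).
by rewrite ler_norml le_h andbT lerNl -innerNr -support_funN le_h.
Qed.

Lemma gaugeZ k w : 0 < k -> gauge C (k *: w) = k * gauge C w.
Proof.
have le_Z k' w' : 0 < k' -> gauge C (k' *: w') <= k' * gauge C w'.
  move=> k'0; rewrite -ler_pdivrMl //; apply: lb_le_inf (dilates_neq0 w') _.
  move=> l [l0 [c Cc ->]]; rewrite ler_pdivrMl // scalerA.
  by apply: gauge_le_scale => //; rewrite mulr_ge0 // ltW.
move=> k0; apply/le_anti; rewrite le_Z //=.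
have := le_Z k^-1 (k *: w); rewrite invr_gt0 scalerA mulVf ?gt_eqF // scale1r.
by move=> /(_ k0); rewrite -ler_pdivrMl ?invr_gt0 // invrK.
Qed.

Lemma gaugeN w : gauge C (- w) = gauge C w.
Proof.
have le_N w' : gauge C (- w') <= gauge C w'.
  apply: lb_le_inf (dilates_neq0 w') _ => l [l0 [c Cc ->]].
  by rewrite -scalerN; apply: gauge_le_scale => //; exact: C_sym.
by apply/le_anti; rewrite le_N /= -{1}[w]opprK le_N.
Qed.

Lemma gaugeD_le x y : gauge C (x + y) <= gauge C x + gauge C y.
Proof.
apply/ler_addgt0Pr => e e0.
have e20 : 0 < e / 2 by rewrite divr_gt0.
have [l1 [c1 [l1_0 Cc1 -> lt1]]] := gauge_approx x e20.
have [l2 [c2 [l2_0 Cc2 -> lt2]]] := gauge_approx y e20.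
apply: (@le_trans _ _ (l1 + l2)); last by lra.
have [l_eq0|l_neq0] := eqVneq (l1 + l2) 0.
  have [-> ->] : l1 = 0 /\ l2 = 0 by split; lra.
  by rewrite !scale0r addr0 gauge0.
have l_gt0 : 0 < l1 + l2 by rewrite lt_neqAle eq_sym l_neq0 addr_ge0.
set t := l1 / (l1 + l2).
have t01 : 0 <= t <= 1 by rewrite divr_ge0 ?addr_ge0 //= ler_pdivrMr // mul1r lerDl.
have -> : l1 *: c1 + l2 *: c2 = (l1 + l2) *: (t *: c1 + (1 - t) *: c2).
  by rewrite scalerDr !scalerA; congr (_ *: _ + _ *: _); rewrite /t; field.
by apply: gauge_le_scale; [exact: ltW | exact: convex_body_conv].
Qed.

Lemma support_fun_le_dual_norm x : support_fun x <= dual_norm C x.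
Proof.
apply: lb_le_inf.
  have [b C_b] := convex_body_inner_bounded x.
  set l := `|b| + 1; have l0 : 0 < l by rewrite ltr_wpDl.
  exists l; split; first exact: ltW.
  exists (l^-1 *: x); last by rewrite scalerA mulfV ?gt_eqF ?scale1r.
  move=> c Cc; rewrite innerZr ler_pdivrMl // mulr1.
  apply: le_trans (ler_norm _) _; apply: le_trans (C_b c Cc) _.
  by rewrite ler_wpDr // ler_norm.
move=> l [l0 [d pol_d ->]]; apply: support_fun_least => c Cc.
by rewrite innerZr -[leRHS]mulr1 ler_wpM2l // pol_d.
Qed.

Lemma support_fun_sgnZ b y : support_fun (sgn R b *: y) = support_fun y.
Proof. by case: b; rewrite /sgn ?scale1r ?scaleN1r ?support_funN. Qed.

Definition rademacher_sup n (M : 'M[R]_(n, m)) (s : {ffun 'I_n -> bool}) : \bar R :=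
  ereal_sup [set (`| n%:R^-1 * \sum_(i < n) sgn R (s i) * inner (row i M) w |)%:E
            | w in [set w : 'rV[R]_m | (gauge C w <= 1)%R]].

Definition rademacher_avg n (M : 'M[R]_(n, m)) : \bar R :=
  ((((2:R) ^+ n)^-1)%:E * \sum_(s : {ffun 'I_n -> bool}) rademacher_sup M s)%E.

Lemma rademacher_FCE n (nu : probability (Borel_sample R n m) R) :
  rademacher_FC C nu = (\int[nu]_(M in setT) rademacher_avg M)%E.
Proof. by []. Qed.

Lemma rademacher_avg_ge0 n (M : 'M[R]_(n, m)) : (0 <= rademacher_avg M)%E.
Proof.
rewrite mule_ge0 ?lee_fin ?invr_ge0 ?exprn_ge0 // sume_ge0 // => s _.
apply: le_trans (ereal_sup_ubound _); last by exists 0; rewrite /= ?gauge0.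
by rewrite lee_fin.
Qed.

Lemma rademacher_sup_le n (M : 'M[R]_(n, m)) s :
  (rademacher_sup M s <= (n%:R^-1 * support_fun (signed_sum (fun i => row i M) n s))%:E)%E.
Proof.
apply: ge_ereal_sup => _ [w /= w1 <-].
rewrite lee_fin -inner_signed_sum normrM ger0_norm ?invr_ge0 // ler_wpM2l ?invr_ge0 //.
exact: abs_inner_le_support_fun.
Qed.

Section UniformSmoothness.
Variables p q alpha : R.
Hypotheses (p0 : 0 < p) (q12 : 1 < q <= 2) (pq : p^-1 + q^-1 = 1).
Hypotheses (alpha0 : 0 < alpha) (C_unif : unif_convex C alpha p).

(* [q c + 2 (q - 1)] comes from the second-order bound on [(1 + a)^q] when
   [h u < h v], [8] from [2 (2 h u)^q] otherwise; [c] is the Young coefficient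
   dual to the weight [2 alpha] given by uniform convexity. *)
Definition smoothness_const := q * young_coef p q (2 * alpha) + 2 * (q - 1) + 8.

Let q0 : 0 < q. Proof. by case/andP: q12 => /(lt_trans ltr01). Qed.

Local Notation h := support_fun.
Local Notation K := smoothness_const.

Lemma smoothness_const_gt0 : 0 < K.
Proof.
have := young_coef_ge0 p q0 (2 * alpha); case/andP: q12 => q1 _.
by rewrite /smoothness_const; nra.
Qed.

Lemma exists_gauge_eq1 : exists w, gauge C w = 1.
Proof.
(* Otherwise the modulus of convexity is [inf set0 = 0], contradicting [0 < alpha]. *)
apply: contrapT => no_unit.
have : alpha <= modulus_convexity C 1.
  by have := @C_unif 1; rewrite powR1 mulr1; apply; rewrite ler01 ler1n.
rewrite /modulus_convexity (_ : [set _ | _] = set0) ?inf0; first by rewrite leNgt alpha0.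
by apply/seteqP; split => // r [x [y [x1 _ _ _]]]; apply: no_unit; exists x.
Qed.

Lemma gauge_midpoint_le w1 w2 : gauge C w1 = 1 -> gauge C w2 = 1 ->
  gauge C (2^-1 *: (w1 + w2)) <= 1 - alpha * gauge C (w1 - w2) `^ p.
Proof.
move=> w1_1 w2_1; set t := gauge C (w1 - w2).
have t02 : 0 <= t <= 2.
  rewrite gauge_ge0 //=; apply: le_trans (gaugeD_le _ _) _ => //.
  by rewrite gaugeN // w1_1 w2_1.
apply: le_trans (lerB (lexx 1) (C_unif t02)); rewrite lerBrDr addrC -lerBrDr.
apply: ge_inf; last by exists w1, w2.
exists 0 => _ [x [y [x1 y1 _ ->]]].
rewrite gaugeZ ?invr_gt0 // subr_ge0 ler_pdivrMl // mulr1.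
by apply: le_trans (gaugeD_le _ _) _; rewrite // x1 y1.
Qed.

Lemma support_fun_approx_unit a e : 0 < e ->
  exists2 w, gauge C w = 1 & h a - e <= inner w a.
Proof.
move=> e0; have [s s1] := exists_gauge_eq1.
have [c Cc lt_c] := support_fun_approx a e0.
have [ca_le0|ca_gt0] := lerP (inner c a) 0.
  have [sa_ge0|sa_lt0] := lerP 0 (inner s a); first by exists s => //; lra.
  by exists (- s); rewrite ?gaugeN // innerNl; lra.
set l := gauge C c.
have l1 : l <= 1 by exact: gauge_le1.
have ca_le := inner_le_gauge_support_fun c a.
have l0 : 0 < l.
  rewrite lt_neqAle gauge_ge0 // andbT; apply/eqP => l_eq0.
  by move: ca_le; rewrite -/l -l_eq0 mul0r; lra.
exists (l^-1 *: c); first by rewrite gaugeZ ?invr_gt0 // mulVf ?gt_eqF.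
rewrite innerZl; apply: le_trans (ltW lt_c) _.
by rewrite ler_pMl // invf_ge1.
Qed.

Lemma support_fun_two_point_le v u : 0 < h v ->
  h (v + u) + h (v - u) <= 2 * h v + young_coef p q (2 * alpha) * h v * (h u / h v) `^ q.
Proof.
move=> hv0; apply/ler_addgt0Pr => e e0.
have e20 : 0 < e / 2 by rewrite divr_gt0.
have [w1 w1_1 approx1] := support_fun_approx_unit (v + u) e20.
have [w2 w2_1 approx2] := support_fun_approx_unit (v - u) e20.
set t := gauge C (w1 - w2); set mid := 2^-1 *: (w1 + w2); set tau := h u / h v.
have sum_split : inner w1 (v + u) + inner w2 (v - u) = 2 * inner mid v + inner (w1 - w2) u.
  by rewrite /mid innerZl innerDl innerBl !innerDr !innerNr; field.
have mid_le : inner mid v <= (1 - alpha * t `^ p) * h v.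
  apply: le_trans (inner_le_gauge_support_fun mid v) _.
  by rewrite ler_wpM2r ?support_fun_ge0 // gauge_midpoint_le.
have diff_le : inner (w1 - w2) u <= h v * (t * tau).
  apply: le_trans (inner_le_gauge_support_fun _ u) _.
  by rewrite /tau (mulrCA (h v)) [h v * (h u / h v)]mulrC divfK ?gt_eqF.
have young :
    h v * (t * tau) <= h v * (2 * alpha * t `^ p + young_coef p q (2 * alpha) * tau `^ q).
  rewrite ler_wpM2l ?support_fun_ge0 // young_weighted ?mulr_gt0 ?gauge_ge0 //.
  by rewrite divr_ge0 ?support_fun_ge0.
move: mid_le diff_le young; rewrite mulrDr; nra.
Qed.

Lemma support_fun_powR_smooth v u :
  h (v + u) `^ q + h (v - u) `^ q <= 2 * h v `^ q + K * h u `^ q.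
Proof.
apply: powR_two_point; rewrite ?support_fun_ge0 //.
- exact: young_coef_ge0.
- exact: support_fun_lipschitz.
- by have := support_fun_lipschitz v (- u); rewrite support_funN.
- exact: support_fun_two_point_le.
Qed.

Section RademacherType.
Variables (n : nat) (x : 'I_n -> 'rV[R]_m) (D : R).
Hypothesis x_le : forall i, h (x i) <= D.

Local Notation signs := {ffun 'I_n -> bool}.

Lemma signed_sum_powR_step (j : 'I_n) :
  \sum_s h (signed_sum x j.+1 s) `^ q <=
  \sum_s h (signed_sum x j s) `^ q + #|signs|%:R * (K * D `^ q).
Proof.
have D0 : 0 <= D := le_trans (support_fun_ge0 _) (x_le j).
have xq_le : h (x j) `^ q <= D `^ q.
  by apply: ge0_ler_powR; rewrite ?nnegrE ?support_fun_ge0 ?(ltW q0).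
have KDq0 : 0 <= K * D `^ q by rewrite mulr_ge0 ?powR_ge0 // ltW // smoothness_const_gt0.
have pair_le s : h (signed_sum x j.+1 s) `^ q + h (signed_sum x j.+1 (flip_sign j s)) `^ q <=
    (h (signed_sum x j s) `^ q + K * D `^ q) + (h (signed_sum x j s) `^ q + K * D `^ q).
  (* [s] and its [j]-th flip give the two points [P + u] and [P - u]. *)
  rewrite !signed_sumS signed_sum_flip ffunE eqxx sgn_negbZ.
  apply: le_trans (support_fun_powR_smooth _ _) _.
  have := ler_wpM2l (ltW smoothness_const_gt0) xq_le.
  by rewrite support_fun_sgnZ; lra.
apply: le_trans (sum_le_involution (flip_signK j) pair_le) _.
by rewrite big_split /= sumr_const mulr_natl.
Qed.

Lemma signed_sum_powR_le k : (k <= n)%N ->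
  \sum_s h (signed_sum x k s) `^ q <= #|signs|%:R * (K * k%:R * D `^ q).
Proof.
elim: k => [_|k IH lt_kn].
  rewrite mulr0 mul0r mulr0 big1 // => s _.
  by rewrite signed_sum0 support_fun0 powR0 // gt_eqF.
apply: le_trans (signed_sum_powR_step (Ordinal lt_kn)) _.
apply: le_trans (lerD (IH (ltnW lt_kn)) (lexx _)) _.
by rewrite le_eqVlt -natr1; apply/orP; left; apply/eqP; ring.
Qed.

Lemma sum_support_fun_signed_sum_le : (0 < n)%N ->
  \sum_s h (signed_sum x n s) <= #|signs|%:R * ((K * n%:R) `^ q^-1 * D).
Proof.
move=> n0; have D0 : 0 <= D := le_trans (support_fun_ge0 _) (x_le (Ordinal n0)).
have Kn0 : 0 <= K * n%:R by rewrite mulr_ge0 ?ler0n // ltW // smoothness_const_gt0.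
apply: (power_mean_le p0 q0 pq (y := fun s => h (signed_sum x n s))).
- by rewrite mulr_ge0 ?powR_ge0.
- by move=> s; exact: support_fun_ge0.
rewrite powRM ?powR_ge0 // -powRrM mulVf ?gt_eqF // powRr1 //.
exact: signed_sum_powR_le.
Qed.

End RademacherType.

Lemma rademacher_avg_le n (M : 'M[R]_(n, m)) D : (0 < n)%N ->
  (forall i, h (row i M) <= D) ->
  (rademacher_avg M <= (K `^ q^-1 * D / n%:R `^ p^-1)%:E)%E.
Proof.
move=> n0 rows_le.
have D0 : 0 <= D := le_trans (support_fun_ge0 _) (rows_le (Ordinal n0)).
have avg_le : (rademacher_avg M <= (((2:R) ^+ n)^-1)%:E *
    \sum_s (n%:R^-1 * h (signed_sum (fun i => row i M) n s))%:E)%E.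
  apply: lee_wpmul2l; first by rewrite lee_fin invr_ge0 exprn_ge0.
  by apply: lee_sum => s _; exact: rademacher_sup_le.
apply: le_trans avg_le _.
rewrite sumEFin -EFinM lee_fin -mulr_sumr.
have n_gt0 : 0 < n%:R :> R by rewrite ltr0n.
apply: le_trans (ler_wpM2l _ (ler_wpM2l _ (sum_support_fun_signed_sum_le rows_le n0))) _.
- by rewrite invr_ge0 exprn_ge0.
- by rewrite invr_ge0 ler0n.
have n_split : n%:R `^ q^-1 * n%:R `^ p^-1 = n%:R :> R.
  by rewrite -powRD ?pnatr_eq0 -?lt0n ?n0 ?implybT // addrC pq powRr1 ?ler0n.
have np0 : 0 < n%:R `^ p^-1 :> R by rewrite powR_gt0.
rewrite card_ffun card_bool card_ord natrX (powRM _ (ltW smoothness_const_gt0) (ler0n _ n)).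
have -> : n%:R^-1 = (n%:R `^ q^-1 * n%:R `^ p^-1)^-1 :> R by rewrite n_split.
rewrite le_eqVlt; apply/orP; left; apply/eqP.
by field; rewrite !gt_eqF ?powR_gt0 ?exprn_gt0.
Qed.

Lemma rademacher_FC_le (X : set 'rV[R]_m) (D : R) n
    (mu : probability (Borel_rV R m) R) (nu : probability (Borel_sample R n m) R) :
  has_ubound [set dual_norm C x | x in X] -> D = sup [set dual_norm C x | x in X] ->
  (1 <= n)%N -> supported_on mu X -> iid_law mu nu ->
  (rademacher_FC C nu <= (K `^ q^-1 * D / n%:R `^ p^-1)%:E)%E.
Proof.
move=> X_ub -> n1 [A [mA AX] muA] iid.
have h_le x : A x -> h x <= sup [set dual_norm C x | x in X].
  move=> Ax; apply: le_trans (support_fun_le_dual_norm x) _.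
  by apply: ub_le_sup X_ub _ _; exists x => //; exact: AX.
have [a Aa] : A !=set0.
  apply/set0P/negP => /eqP A0; move: muA; rewrite A0 measure0 => /eqP.
  by rewrite eqe eq_sym oner_eq0.
rewrite rademacher_FCE.
apply: ge0_integral_le_cst_ae.
- exact: measurable_rows_in mA.
- exact: (iid_law_rows_in iid mA muA).
- move=> M; exact: rademacher_avg_ge0.
- rewrite divr_ge0 ?powR_ge0 // mulr_ge0 ?powR_ge0 //.
  exact: le_trans (support_fun_ge0 a) (h_le a Aa).
- by move=> M rows_A; apply: rademacher_avg_le n1 _ => i; exact: h_le.
Qed.

End UniformSmoothness.

End ConvexBody.

Theorem mainTheorem4 (R : realType) (p q alpha : R) :
  2 <= p -> 1 < q <= 2 -> p^-1 + q^-1 = 1 -> 0 < alpha ->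
  exists2 K : R, 0 < K &
  forall (m : nat) (C : set 'rV[R]_m),
    compact C -> convex_set C -> centrally_symmetric C ->
    (interior C) !=set0 -> unif_convex C alpha p ->
  forall (X : set 'rV[R]_m) (D : R),
    has_ubound [set dual_norm C x | x in X] ->
    D = sup [set dual_norm C x | x in X] ->
  forall (n : nat) (mu : probability (Borel_rV R m) R)
         (nu : probability (Borel_sample R n m) R),
    (1 <= n)%N -> supported_on mu X -> iid_law mu nu ->
    (rademacher_FC C nu <= (powR K q^-1 * D / powR n%:R p^-1)%:E)%E.
Proof.
move=> p2 q12 pq alpha0; have p0 : 0 < p by apply: lt_le_trans p2.
exists (smoothness_const p q alpha); first exact: smoothness_const_gt0.
move=> m C C_compact C_convex C_sym C_int C_unif X D X_ub D_sup n mu nu n1 mu_X iid.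
exact: (rademacher_FC_le C_compact C_convex C_sym C_int p0 q12 pq alpha0 C_unif
  X_ub D_sup n1 mu_X iid).
Qed.
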